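(* Let $u\in[0,1]$, $s\geq 1$, and for $x\in(0,1)$ define $$g_{u,s}(x)=\frac{s}{2}\log(1-ux^2)+\log\left(\frac{\operatorname{arth}(x)}{x}\right),$$ where $\operatorname{arth}(x)=\frac12\log\frac{1+x}{1-x}$ is the inverse hyperbolic tangent. Then $g_{u,s}(x)>0$ for all $x\in(0,1)$ if and only if $3su\leq 2$. *)

From Stdlib Require Import Reals.
Open Scope R_scope.

Definition arth (x : R) : R := / 2 * ln ((1 + x) / (1 - x)).

Definition g (u s x : R) : R := s / 2 * ln (1 - u * x ^ 2) + ln (arth x / x).

(* For [3 s u <= 2] the comparison rests on the lower bound
   [arth x > x / sqrt (1 - 2/3 x^2)] and on Bernoulli's inequality
   [(1 - t)^s >= 1 - s t], which give
   [g u s x > (1/2) ln (1 - s u x^2) - (1/2) ln (1 - 2/3 x^2) >= 0].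
   Conversely, if [v := s u > 2/3], the upper bound
   [arth x <= x + x^3 / (3 (1 - x^2))] together with [ln y <= y - 1] gives
   [g u s x <= x^2 / (3 (1 - x^2)) - v x^2 / 2], which vanishes at
   [x^2 = 1 - 2 / (3 v)]. *)
From Stdlib Require Import Reals Lra.
From Coquelicot Require Import Coquelicot.
Open Scope R_scope.

Lemma lt_of_derive_pos (f f' : R -> R) (a b : R) : a < b ->
  (forall c, a <= c <= b -> is_derive f c (f' c)) ->
  (forall c, a < c < b -> 0 < f' c) -> f a < f b.
Proof.
intros Hab Hd Hpos.
destruct (MVT_cor2 f f' a b) as [c [Hfab Hc]]; [lra | |].
- intros c Hc; apply is_derive_Reals; now apply Hd.
- specialize (Hpos c Hc); nra.
Qed.

Lemma le_of_derive_nonneg (f f' : R -> R) (a b : R) : a <= b ->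
  (forall c, a <= c <= b -> is_derive f c (f' c)) ->
  (forall c, a < c < b -> 0 <= f' c) -> f a <= f b.
Proof.
intros Hab Hd Hpos.
destruct (Req_dec a b) as [-> | Hne]; [lra |].
destruct (MVT_cor2 f f' a b) as [c [Hfab Hc]]; [lra | |].
- intros c Hc; apply is_derive_Reals; now apply Hd.
- specialize (Hpos c Hc); nra.
Qed.

Lemma ln_le_sub_1 (y : R) : 0 < y -> ln y <= y - 1.
Proof.
intros Hy; pose proof (exp_ineq1_le (ln y)) as H.
rewrite exp_ln in H; lra.
Qed.

Lemma arth_0 : arth 0 = 0.
Proof.
unfold arth; replace ((1 + 0) / (1 - 0)) with 1 by field.
rewrite ln_1; ring.
Qed.

Lemma is_derive_arth (c : R) : -1 < c < 1 -> is_derive arth c (/ (1 - c ^ 2)).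
Proof.
intros Hc; unfold arth; auto_derive.
- repeat split; try lra; apply Rdiv_lt_0_compat; lra.
- field; repeat split; nra.
Qed.

Lemma is_derive_div_sqrt (c : R) : 0 < 1 - 2/3 * c ^ 2 ->
  is_derive (fun y => y / sqrt (1 - 2/3 * y ^ 2)) c
    (/ sqrt (1 - 2/3 * c ^ 2) ^ 3).
Proof.
intros Hp.
pose proof (sqrt_lt_R0 _ Hp) as Hq.
pose proof (pow2_sqrt _ (Rlt_le _ _ Hp)) as Hqq.
replace (1 - 2/3 * c ^ 2) with (1 + - (2/3 * (c * (c * 1)))) in * by ring.
auto_derive; [repeat split; lra |].
set (q := sqrt _) in *.
field_simplify; [| lra ..].
rewrite Hqq; field; lra.
Qed.

(* Cubing [1 - 2/3 c^2] against squaring [1 - c^2] leaves [c^4 (1/3 - 8/27 c^2)]. *)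
Lemma one_sub_sqr_lt_sqrt_cube (c : R) : 0 < c < 1 ->
  1 - c ^ 2 < sqrt (1 - 2/3 * c ^ 2) ^ 3.
Proof.
intros Hc.
assert (Hp : 0 < 1 - 2/3 * c ^ 2) by nra.
pose proof (sqrt_lt_R0 _ Hp) as Hq.
pose proof (pow2_sqrt _ (Rlt_le _ _ Hp)) as Hqq.
set (q := sqrt _) in *.
assert (Hsq : (1 - c ^ 2) ^ 2 < (q ^ 3) ^ 2).
{ replace ((q ^ 3) ^ 2) with ((q ^ 2) ^ 3) by ring.
  rewrite Hqq.
  assert (0 < c ^ 4 * (1/3 - 8/27 * c ^ 2))
    by (apply Rmult_lt_0_compat; [apply pow_lt |]; nra).
  nra. }
assert (0 < q ^ 3) by (apply pow_lt; lra).
nra.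
Qed.

Lemma arth_gt_div_sqrt (x : R) : 0 < x < 1 ->
  x / sqrt (1 - 2/3 * x ^ 2) < arth x.
Proof.
intros Hx.
set (h := fun y => arth y - y / sqrt (1 - 2/3 * y ^ 2)).
assert (Hh : h 0 < h x).
{ apply (lt_of_derive_pos h
    (fun c => / (1 - c ^ 2) - / sqrt (1 - 2/3 * c ^ 2) ^ 3)); [lra | |].
  - intros c Hc.
    apply (is_derive_minus arth (fun y => y / sqrt (1 - 2/3 * y ^ 2))).
    + apply is_derive_arth; lra.
    + apply is_derive_div_sqrt; nra.
  - intros c Hc.
    pose proof (one_sub_sqr_lt_sqrt_cube c ltac:(lra)) as Hcube.
    apply Rlt_0_minus, Rinv_lt_contravar; [| exact Hcube].
    apply Rmult_lt_0_compat; [nra | apply pow_lt, sqrt_lt_R0; nra]. }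
unfold h in Hh; rewrite arth_0 in Hh.
replace (0 / sqrt (1 - 2/3 * 0 ^ 2)) with 0 in Hh by (unfold Rdiv; ring).
lra.
Qed.

Lemma arth_le (x : R) : 0 <= x < 1 -> arth x <= x + x ^ 3 / (3 * (1 - x ^ 2)).
Proof.
intros Hx.
set (k := fun y => y + y ^ 3 / (3 * (1 - y ^ 2)) - arth y).
assert (Hk : k 0 <= k x).
{ apply (le_of_derive_nonneg k (fun c => 2/3 * c ^ 4 / (1 - c ^ 2) ^ 2));
    [lra | |].
  - intros c Hc.
    assert (0 < 1 - c ^ 2) by nra.
    unfold k, arth; auto_derive.
    + repeat split; try lra; apply Rdiv_lt_0_compat; lra.
    + field; repeat split; lra.
  - intros c Hc.
    assert (0 < (1 - c ^ 2) ^ 2) by (apply pow_lt; nra).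
    apply Rdiv_le_0_compat; [| lra].
    assert (0 <= c ^ 4) by (apply pow_le; lra); lra. }
unfold k in Hk; rewrite arth_0 in Hk.
replace (0 + 0 ^ 3 / (3 * (1 - 0 ^ 2)) - 0) with 0 in Hk by field.
lra.
Qed.

Lemma ln_one_sub_mul_le (s t : R) : 1 <= s -> 0 <= t -> s * t < 1 ->
  ln (1 - s * t) <= s * ln (1 - t).
Proof.
intros Hs Ht Hst.
assert (Ht1 : t < 1) by nra.
set (phi := fun r => r * ln (1 - t) - ln (1 - r * t)).
assert (Hphi : phi 1 <= phi s).
{ apply (le_of_derive_nonneg phi (fun r => ln (1 - t) + t / (1 - r * t)));
    [lra | |].
  - intros c Hc; unfold phi.
    assert (0 < 1 - c * t) by nra.
    auto_derive; [lra | field; lra].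
  - intros c Hc.
    assert (0 < 1 - c * t) by nra.
    (* [ln (1 - t) >= -t / (1 - t)] is [ln y <= y - 1] at [y = 1 / (1 - t)]. *)
    pose proof (ln_le_sub_1 (/ (1 - t))) as Hln.
    rewrite ln_Rinv in Hln by lra.
    assert (t / (1 - t) <= t / (1 - c * t)).
    { apply Rmult_le_compat_l; [lra |]; apply Rinv_le_contravar; nra. }
    assert (/ (1 - t) - 1 = t / (1 - t)) by (field; lra).
    assert (0 < / (1 - t)) by (apply Rinv_0_lt_compat; lra).
    lra. }
unfold phi in Hphi; rewrite !Rmult_1_l in Hphi; lra.
Qed.

Lemma g_pos (u s x : R) : 0 <= u -> 1 <= s -> 3 * s * u <= 2 -> 0 < x < 1 ->
  0 < g u s x.
Proof.
intros Hu Hs Hsu Hx.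
assert (Hx2 : 0 < x ^ 2 < 1) by (split; nra).
assert (Hp : 0 < 1 - 2/3 * x ^ 2) by nra.
pose proof (ln_one_sub_mul_le s (u * x ^ 2) Hs ltac:(nra) ltac:(nra)) as Hbern.
assert (Hmono : ln (1 - 2/3 * x ^ 2) <= ln (1 - s * (u * x ^ 2)))
  by (apply ln_le; nra).
pose proof (arth_gt_div_sqrt x Hx) as Hlb.
pose proof (sqrt_lt_R0 _ Hp) as Hq.
pose proof (sqrt_sqrt _ (Rlt_le _ _ Hp)) as Hqq.
set (q := sqrt _) in *.
assert (Hratio : / q < arth x / x).
{ apply (Rmult_lt_reg_r x); [lra |].
  unfold Rdiv; rewrite Rmult_assoc, Rinv_l by lra.
  replace (/ q * x) with (x / q) by (unfold Rdiv; ring); lra. }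
assert (Hln : ln (/ q) < ln (arth x / x))
  by (apply ln_increasing; [apply Rinv_0_lt_compat |]; assumption).
rewrite ln_Rinv in Hln by assumption.
rewrite <- Hqq, ln_mult in Hmono by assumption.
unfold g; nra.
Qed.

Lemma exists_g_nonpos (u s : R) : 0 <= u <= 1 -> 2 < 3 * s * u ->
  exists x, 0 < x < 1 /\ g u s x <= 0.
Proof.
intros Hu Hsu.
set (v := s * u).
set (x := sqrt (1 - 2 / (3 * v))); exists x.
assert (Hv : 2/3 < v) by (unfold v; lra).
assert (Hw : 0 < 2 / (3 * v) < 1).
{ split; [apply Rdiv_lt_0_compat; lra |].
  apply (Rmult_lt_reg_r (3 * v)); [lra |]; field_simplify; lra. }
assert (Hxx : x ^ 2 = 1 - 2 / (3 * v)) by (apply pow2_sqrt; lra).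
assert (Hx : 0 < x < 1) by (split; [apply sqrt_lt_R0 |]; nra).
split; [exact Hx |].
pose proof (arth_le x ltac:(lra)) as Hub.
assert (Ha : 0 < arth x).
{ pose proof (arth_gt_div_sqrt x Hx).
  assert (0 < x / sqrt (1 - 2/3 * x ^ 2))
    by (apply Rdiv_lt_0_compat; [lra | apply sqrt_lt_R0; nra]).
  lra. }
pose proof (ln_le_sub_1 (arth x / x) ltac:(apply Rdiv_lt_0_compat; lra)) as Hl1.
pose proof (ln_le_sub_1 (1 - u * x ^ 2) ltac:(nra)) as Hl2.
assert (Hratio : arth x / x - 1 <= x ^ 2 / (3 * (1 - x ^ 2))).
{ apply (Rmult_le_reg_r x); [lra |].
  replace ((arth x / x - 1) * x) with (arth x - x) by (field; lra).
  replace (x ^ 2 / (3 * (1 - x ^ 2)) * x) with (x ^ 3 / (3 * (1 - x ^ 2)))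
    by (field; nra).
  lra. }
assert (Hwit : x ^ 2 / (3 * (1 - x ^ 2)) = v * x ^ 2 / 2)
  by (rewrite Hxx; field; lra).
assert (Hlog : s / 2 * ln (1 - u * x ^ 2) <= - (v * x ^ 2 / 2)).
{ apply (Rle_trans _ (s / 2 * (- (u * x ^ 2)))).
  - apply Rmult_le_compat_l; [unfold v in Hv; nra | lra].
  - unfold v; right; field. }
unfold g; lra.
Qed.

Theorem lemma2p2 (u s : R) (hu : 0 <= u <= 1) (hs : 1 <= s) :
  (forall x : R, 0 < x < 1 -> 0 < g u s x) <-> 3 * s * u <= 2.
Proof.
split.
- intros Hg.
  destruct (Rle_lt_dec (3 * s * u) 2) as [Hle | Hlt]; [exact Hle | exfalso].
  destruct (exists_g_nonpos u s hu Hlt) as [x [Hx Hnonpos]].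
  specialize (Hg _ Hx); lra.
- intros Hsu x Hx; apply g_pos; lra.
Qed.
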